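(* Fix $N\ge1$, $B>0$, $a_{\max}>0$, and for each $n$: $a_n\ge0$, $\zeta_n\in(0,1]$, $\beta_n\ge0$, integers $\tau_n\ge1$, $D_n\ge1$. Call a pair of vectors $(\mathbf p,\mathbf q)\in[0,1]^N\times[0,1]^N$ admissible if $0\le q_n<p_n\le1$ and $q_n\le a_n/a_{\max}\le p_n$ for all $n$. For admissible $(\mathbf p,\mathbf q)$ let $\phi_I^*(\mathbf p,\mathbf q)=\min_{\lambda\ge0}g_I(\lambda;\mathbf p,\mathbf q)$, where $g_I$ is defined below. Then: (i) for fixed $\mathbf p$, if $(\mathbf p,\mathbf q)$ and $(\mathbf p,\mathbf q')$ are admissible and $\mathbf q\le\mathbf q'$ componentwise, then $\phi_I^*(\mathbf p,\mathbf q)\ge\phi_I^*(\mathbf p,\mathbf q')$; (ii) if $(\mathbf p,\mathbf 0)$ and $(\mathbf p',\mathbf 0)$ are admissible and $\mathbf p\le\mathbf p'$ componentwise, then $\phi_I^*(\mathbf p,\mathbf 0)\le\phi_I^*(\mathbf p',\mathbf 0)$.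
   Context: Put $\tilde a_n=\frac{a_n-a_{\max}q_n}{p_n-q_n}$. For $\lambda\ge0$ and $n$ with $\zeta_n\beta_n>\lambda$, let $c_n(\lambda)=\frac{\lambda}{(\zeta_n\beta_n-\lambda)(1-\zeta_n)^{\tau_n}+\lambda}$ and $v_n(\lambda)=p_n\frac{1-(1-\zeta_n)^{\tau_n}}{\zeta_n}(\zeta_n\beta_n-\lambda)$ if $p_n\le c_n(\lambda)$, and $v_n(\lambda)=-(1-p_n)\frac{1-(1-\zeta_n)^{D_n}}{\zeta_n}\lambda+p_n\frac{1-(1-\zeta_n)^{\tau_n+D_n}}{\zeta_n}(\zeta_n\beta_n-\lambda)$ if $p_n>c_n(\lambda)$. Define $g_I(\lambda;\mathbf p,\mathbf q)=\lambda B+\sum_{n:\ \zeta_n\beta_n>\lambda}\big[\tilde a_n v_n(\lambda)+(a_{\max}-\tilde a_n)q_n\frac{1-(1-\zeta_n)^{\tau_n}}{\zeta_n}(\zeta_n\beta_n-\lambda)\big]$. This is the Lagrange dual function of the weighted timely-throughput problem with static channels, binary resource levels and imperfect prediction with true-positive rates $\mathbf p$ and false-negative rates $\mathbf q$; $\phi_I^*$ is the optimal weighted timely-throughput. *)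

From Stdlib Require Import Reals Lra ClassicalEpsilon.
Open Scope R_scope.

Fixpoint sumN (N : nat) (f : nat -> R) : R :=
  match N with
  | O => 0
  | S k => sumN k f + f k
  end.

Definition geo (z : R) (k : nat) : R := (1 - (1 - z) ^ k) / z.

Section Model.
Variables (B amax : R) (a zeta beta : nat -> R) (tau D : nat -> nat).

Definition atilde (p q : nat -> R) (n : nat) : R :=
  (a n - amax * q n) / (p n - q n).

Definition c_thr (lam : R) (n : nat) : R :=
  lam / ((zeta n * beta n - lam) * (1 - zeta n) ^ (tau n) + lam).

Definition v_term (lam : R) (p : nat -> R) (n : nat) : R :=
  if Rle_dec (p n) (c_thr lam n) then
    p n * geo (zeta n) (tau n) * (zeta n * beta n - lam)
  else
    - (1 - p n) * geo (zeta n) (D n) * lam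
    + p n * geo (zeta n) (tau n + D n) * (zeta n * beta n - lam).

Definition g_I (N : nat) (lam : R) (p q : nat -> R) : R :=
  lam * B + sumN N (fun n =>
    if Rlt_dec lam (zeta n * beta n) then
      atilde p q n * v_term lam p n
      + (amax - atilde p q n) * q n * geo (zeta n) (tau n) * (zeta n * beta n - lam)
    else 0).

Definition is_minimizer (N : nat) (p q : nat -> R) (lam0 : R) : Prop :=
  0 <= lam0 /\ forall lam, 0 <= lam -> g_I N lam0 p q <= g_I N lam p q.

Definition phi_I (N : nat) (p q : nat -> R) : R :=
  g_I N (epsilon (inhabits 0) (is_minimizer N p q)) p q.

Definition admissible (N : nat) (p q : nat -> R) : Prop :=
  forall n, (n < N)%nat ->
    0 <= q n /\ q n < p n /\ p n <= 1 /\ q n <= a n / amax /\ a n / amax <= p n.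
End Model.

From Stdlib Require Import Reals Lra Psatz ClassicalEpsilon FunctionalExtensionality.
Open Scope R_scope.

(* v_n(λ) is always the larger of its two branches (they cross exactly at
   p_n = c_n(λ)), so for λ >= 0 the dual function g_I coincides with a
   continuous function built from affine maps and max, and it equals λ B once
   λ >= ζ_n β_n for all n.  Its minimum over λ >= 0 is therefore attained on a
   compact interval, and φ_I^* inherits every pointwise comparison of dual
   functions.  These comparisons hold summand by summand.  With
   X = ζ_n β_n - λ, G = (1 - (1 - ζ_n)^τ_n) / ζ_n and k = a_max p_n - a_n >= 0,
   a summand equals a_max v_n - k G X - k (v_n - p_n G X) / (p_n - q_n), which
   decreases in q_n because v_n >= p_n G X.  For q = 0 it equals
   max (a_n G X, a_n G' X + a_n G_D λ (1 - 1/p_n)), with G' and G_D the analogous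
   sums for τ_n + D_n and D_n, which increases in p_n. *)

Lemma geo_nonneg z k : 0 < z <= 1 -> 0 <= geo z k.
Proof.
  intros Hz; unfold geo.
  assert (Hk : (1 - z) ^ k <= 1 ^ k) by (apply pow_incr; lra).
  rewrite pow1 in Hk.
  apply Rmult_le_pos; [lra | left; apply Rinv_0_lt_compat; lra].
Qed.

Lemma geo_add z t d : z <> 0 -> geo z (t + d) = geo z t + (1 - z) ^ t * geo z d.
Proof. intros Hz; unfold geo; rewrite pow_add; field; exact Hz. Qed.

Lemma sumN_ext N f g : (forall n, (n < N)%nat -> f n = g n) -> sumN N f = sumN N g.
Proof. induction N as [|N IH]; intros H; simpl; [reflexivity|]. rewrite IH, H; auto. Qed.

Lemma sumN_le N f g : (forall n, (n < N)%nat -> f n <= g n) -> sumN N f <= sumN N g.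
Proof. induction N as [|N IH]; intros H; simpl; [lra|]. apply Rplus_le_compat; auto. Qed.

Lemma sumN_nonneg N f : (forall n, (n < N)%nat -> 0 <= f n) -> 0 <= sumN N f.
Proof.
  induction N as [|N IH]; intros H; simpl; [lra|].
  assert (0 <= sumN N f) by (apply IH; intros; apply H; lia).
  assert (0 <= f N) by (apply H; lia).
  lra.
Qed.

Lemma sumN_ge_term N f : (forall n, (n < N)%nat -> 0 <= f n) ->
  forall k, (k < N)%nat -> f k <= sumN N f.
Proof.
  induction N as [|N IH]; intros H k Hk; simpl; [lia|].
  assert (H0 : 0 <= sumN N f) by (apply sumN_nonneg; intros; apply H; lia).
  destruct (Nat.eq_dec k N) as [->|Hne]; [lra|].
  assert (f k <= sumN N f) by (apply IH; [intros; apply H|]; lia).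
  assert (0 <= f N) by (apply H; lia). lra.
Qed.

Lemma continuity_cst c : continuity (fun _ : R => c).
Proof. apply continuity_const; intros ? ?; reflexivity. Qed.

Lemma continuity_sumN N (h : nat -> R -> R) :
  (forall n, continuity (h n)) -> continuity (fun x => sumN N (fun n => h n x)).
Proof.
  intros H; induction N as [|N IH]; simpl.
  - apply continuity_cst.
  - exact (continuity_plus _ (h N) IH (H N)).
Qed.

Lemma continuity_Rmax f g :
  continuity f -> continuity g -> continuity (fun x => Rmax (f x) (g x)).
Proof.
  intros Hf Hg.
  replace (fun x => Rmax (f x) (g x))
    with (fun x => (f x + g x + Rabs (f x - g x)) * / 2).
  - apply (continuity_mult _ (fun _ => / 2)).
    + apply (continuity_plus (fun x => f x + g x)); [now apply continuity_plus|].
      exact (continuity_comp _ Rabs (continuity_minus f g Hf Hg) Rcontinuity_abs).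
    + apply continuity_cst.
  - apply functional_extensionality; intros x; unfold Rmax.
    destruct (Rle_dec (f x) (g x)); [rewrite Rabs_left1 | rewrite Rabs_right]; lra.
Qed.

Section DualFunction.
Variables (B amax : R) (a zeta beta : nat -> R) (tau D : nat -> nat).

Definition v_short (lam : R) (p : nat -> R) (n : nat) : R :=
  p n * geo (zeta n) (tau n) * (zeta n * beta n - lam).

Definition v_long (lam : R) (p : nat -> R) (n : nat) : R :=
  - (1 - p n) * geo (zeta n) (D n) * lam
  + p n * geo (zeta n) (tau n + D n) * (zeta n * beta n - lam).

Lemma v_term_Rmax lam p n :
  0 < zeta n <= 1 -> 0 <= p n -> 0 <= lam < zeta n * beta n ->
  v_term zeta beta tau D lam p n = Rmax (v_short lam p n) (v_long lam p n).
Proof.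
  intros Hz Hp Hlam; unfold v_term, c_thr.
  set (E := (1 - zeta n) ^ tau n).
  set (den := (zeta n * beta n - lam) * E + lam).
  assert (HE : 0 <= E) by (apply pow_le; lra).
  assert (Hden : 0 <= den) by (unfold den; nra).
  assert (HgD := geo_nonneg (zeta n) (D n) Hz).
  assert (Hdiff : v_long lam p n - v_short lam p n = geo (zeta n) (D n) * (p n * den - lam)).
  { unfold v_long, v_short, den, E; rewrite geo_add by lra; ring. }
  destruct (Req_dec den 0) as [H0|H0].
  - (* then λ = 0, and c_n(λ) = λ / 0 = 0 by Rocq's convention *)
    assert (lam = 0) by (unfold den in H0; nra).
    rewrite H0 in Hdiff |- *; unfold Rdiv; rewrite Rinv_0, Rmult_0_r.
    fold (v_short lam p n) (v_long lam p n).
    destruct (Rle_dec (p n) 0); [rewrite Rmax_left | rewrite Rmax_right]; nra.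
  - assert (Hden' : 0 < den) by lra.
    destruct (Rle_dec (p n) (lam / den)) as [Hle|Hgt].
    + apply (Rmult_le_compat_r den) in Hle; [|lra].
      unfold Rdiv in Hle; rewrite Rmult_assoc, Rinv_l, Rmult_1_r in Hle by lra.
      rewrite Rmax_left; [reflexivity | nra].
    + apply Rnot_le_lt, (Rmult_lt_compat_r den) in Hgt; [|lra].
      unfold Rdiv in Hgt; rewrite Rmult_assoc, Rinv_l, Rmult_1_r in Hgt by lra.
      rewrite Rmax_right; [reflexivity | nra].
Qed.

Definition g_summand (lam : R) (p q : nat -> R) (n : nat) : R :=
  if Rlt_dec lam (zeta n * beta n) then
    atilde amax a p q n * v_term zeta beta tau D lam p n
    + (amax - atilde amax a p q n) * q n * geo (zeta n) (tau n) * (zeta n * beta n - lam)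
  else 0.

Lemma g_I_sumN N lam p q :
  g_I B amax a zeta beta tau D N lam p q = lam * B + sumN N (g_summand lam p q).
Proof. reflexivity. Qed.

Definition g_summand_ext (p q : nat -> R) (n : nat) (lam : R) : R :=
  atilde amax a p q n * Rmax 0 (Rmax (v_short lam p n) (v_long lam p n))
  + (amax - atilde amax a p q n) * q n * geo (zeta n) (tau n)
    * Rmax 0 (zeta n * beta n - lam).

Lemma continuity_g_summand_ext p q n : continuity (g_summand_ext p q n).
Proof.
  unfold g_summand_ext, v_short, v_long.
  apply (continuity_plus (fun lam => _ * Rmax 0 _) (fun lam => _ * Rmax 0 _));
    apply (continuity_mult (fun _ => _)); try apply continuity_cst;
    apply (continuity_Rmax (fun _ => 0)); try apply continuity_cst.
  - apply continuity_Rmax; apply derivable_continuous; reg.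
  - apply derivable_continuous; reg.
Qed.

Lemma g_summand_eq_ext lam p q n :
  0 < zeta n <= 1 -> 0 <= p n <= 1 -> 0 <= lam ->
  g_summand lam p q n = g_summand_ext p q n lam.
Proof.
  intros Hz Hp Hlam; unfold g_summand, g_summand_ext.
  assert (G1 := geo_nonneg (zeta n) (tau n) Hz).
  assert (G2 := geo_nonneg (zeta n) (D n) Hz).
  assert (G3 := geo_nonneg (zeta n) (tau n + D n) Hz).
  destruct (Rlt_dec lam (zeta n * beta n)) as [Hlt|Hge].
  - rewrite v_term_Rmax by lra.
    assert (Hshort : 0 <= v_short lam p n)
      by (unfold v_short; apply Rmult_le_pos; [apply Rmult_le_pos|]; lra).
    rewrite (Rmax_right 0 (zeta n * beta n - lam)), (Rmax_right 0 (Rmax _ _))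
      by (try apply (Rle_trans _ _ _ Hshort), Rmax_l; lra).
    reflexivity.
  - assert (v_short lam p n <= 0).
    { unfold v_short.
      assert (0 <= p n * geo (zeta n) (tau n)) by (apply Rmult_le_pos; lra). nra. }
    assert (v_long lam p n <= 0).
    { unfold v_long.
      assert (0 <= p n * geo (zeta n) (tau n + D n)) by (apply Rmult_le_pos; lra).
      assert (0 <= (1 - p n) * geo (zeta n) (D n)) by (apply Rmult_le_pos; lra). nra. }
    rewrite (Rmax_left 0 (zeta n * beta n - lam)), (Rmax_left 0 (Rmax _ _))
      by (try apply Rmax_lub; lra).
    ring.
Qed.

Section Minimum.
Variable N : nat.
Hypothesis HB : 0 < B.
Hypothesis Hzeta : forall n, (n < N)%nat -> 0 < zeta n <= 1.

Definition g_I_ext (p q : nat -> R) (lam : R) : R :=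
  lam * B + sumN N (fun n => g_summand_ext p q n lam).

Lemma continuity_g_I_ext p q : continuity (g_I_ext p q).
Proof.
  apply (continuity_plus (fun lam => lam * B)).
  - apply derivable_continuous; reg.
  - apply continuity_sumN; intros n; apply continuity_g_summand_ext.
Qed.

Lemma g_I_eq_ext p q lam :
  (forall n, (n < N)%nat -> 0 <= p n <= 1) -> 0 <= lam ->
  g_I B amax a zeta beta tau D N lam p q = g_I_ext p q lam.
Proof.
  intros Hp Hlam; rewrite g_I_sumN; unfold g_I_ext.
  f_equal; apply sumN_ext; intros n Hn.
  apply g_summand_eq_ext; auto.
Qed.

Lemma g_I_beyond p q lam :
  (forall n, (n < N)%nat -> zeta n * beta n <= lam) ->
  g_I B amax a zeta beta tau D N lam p q = lam * B.
Proof.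
  intros H; rewrite g_I_sumN, (sumN_ext N _ (fun _ => 0)).
  - clear; induction N as [|k IH]; simpl; lra.
  - intros n Hn; unfold g_summand.
    destruct (Rlt_dec lam (zeta n * beta n)); [specialize (H n Hn); lra | reflexivity].
Qed.

Lemma exists_minimizer p q :
  (forall n, (n < N)%nat -> 0 <= p n <= 1) ->
  exists lam0, is_minimizer B amax a zeta beta tau D N p q lam0.
Proof.
  intros Hp.
  set (M := sumN N (fun n => Rabs (zeta n * beta n))).
  assert (HM : forall n, (n < N)%nat -> zeta n * beta n <= M).
  { intros n Hn; apply (Rle_trans _ _ _ (RRle_abs _)).
    apply (sumN_ge_term N (fun k => Rabs (zeta k * beta k))); auto using Rabs_pos. }
  assert (HM0 : 0 <= M) by (apply sumN_nonneg; auto using Rabs_pos).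
  destruct (continuity_ab_min (g_I_ext p q) 0 M HM0
              (fun c _ => continuity_g_I_ext p q c)) as [lam0 [Hmin Hlam0]].
  exists lam0; split; [lra|]; intros lam Hlam.
  rewrite g_I_eq_ext by (auto; lra).
  destruct (Rle_dec lam M) as [HlM|HlM].
  - rewrite g_I_eq_ext by auto; apply Hmin; lra.
  - rewrite g_I_beyond by (intros n Hn; specialize (HM n Hn); lra).
    apply (Rle_trans _ (g_I_ext p q M)); [apply Hmin; lra|].
    rewrite <- g_I_eq_ext, g_I_beyond by (auto; lra). nra.
Qed.

Lemma phi_I_le p q p' q' :
  (forall n, (n < N)%nat -> 0 <= p n <= 1) ->
  (forall n, (n < N)%nat -> 0 <= p' n <= 1) ->
  (forall lam, 0 <= lam ->
     g_I B amax a zeta beta tau D N lam p' q' <= g_I B amax a zeta beta tau D N lam p q) ->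
  phi_I B amax a zeta beta tau D N p' q' <= phi_I B amax a zeta beta tau D N p q.
Proof.
  intros Hp Hp' Hg; unfold phi_I.
  destruct (epsilon_spec (inhabits 0) _ (exists_minimizer p q Hp)) as [H0 _].
  destruct (epsilon_spec (inhabits 0) _ (exists_minimizer p' q' Hp')) as [_ Hmin'].
  eapply Rle_trans; [apply Hmin', H0 | apply Hg, H0].
Qed.

End Minimum.

Lemma g_summand_antitone_q lam p q q' n :
  0 < zeta n <= 1 -> 0 <= lam -> 0 <= q n <= q' n -> q' n < p n <= 1 -> a n <= amax * p n ->
  g_summand lam p q' n <= g_summand lam p q n.
Proof.
  intros Hz Hlam Hq Hqp Hap; unfold g_summand, atilde.
  destruct (Rlt_dec lam (zeta n * beta n)) as [Hlt|]; [|lra].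
  assert (Hv : v_short lam p n <= v_term zeta beta tau D lam p n)
    by (rewrite v_term_Rmax by lra; apply Rmax_l).
  unfold v_short in Hv.
  set (v := v_term zeta beta tau D lam p n) in *.
  set (GX := geo (zeta n) (tau n) * (zeta n * beta n - lam)).
  set (k := amax * p n - a n).
  set (d := v - p n * GX).
  assert (Hform : forall r, r < p n ->
    (a n - amax * r) / (p n - r) * v
    + (amax - (a n - amax * r) / (p n - r)) * r * geo (zeta n) (tau n) * (zeta n * beta n - lam)
    = amax * v - k * GX - k * d * / (p n - r)).
  { intros r Hr; unfold k, d, GX; field; lra. }
  rewrite !Hform by lra.
  assert (0 <= k * d) by (unfold k, d, GX; apply Rmult_le_pos; lra).
  assert (/ (p n - q n) <= / (p n - q' n)) by (apply Rinv_le_contravar; lra).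
  enough (k * d * / (p n - q n) <= k * d * / (p n - q' n)) by lra.
  apply Rmult_le_compat_l; assumption.
Qed.

Lemma g_summand_monotone_p lam p p' n :
  0 < zeta n <= 1 -> 0 <= lam -> 0 <= a n -> 0 < p n <= p' n -> p' n <= 1 ->
  g_summand lam p (fun _ => 0) n <= g_summand lam p' (fun _ => 0) n.
Proof.
  intros Hz Hlam Ha Hp Hp'; unfold g_summand, atilde.
  destruct (Rlt_dec lam (zeta n * beta n)) as [Hlt|]; [|lra].
  rewrite !v_term_Rmax by lra; unfold v_short, v_long.
  set (GX := geo (zeta n) (tau n) * (zeta n * beta n - lam)).
  set (GTX := geo (zeta n) (tau n + D n) * (zeta n * beta n - lam)).
  set (aGD := a n * geo (zeta n) (D n) * lam).
  assert (HaGD : 0 <= aGD)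
    by (unfold aGD; apply Rmult_le_pos; [apply Rmult_le_pos, geo_nonneg|]; lra).
  assert (Hform : forall r, 0 < r ->
    (a n - amax * 0) / (r - 0)
      * Rmax (r * geo (zeta n) (tau n) * (zeta n * beta n - lam))
             (- (1 - r) * geo (zeta n) (D n) * lam
              + r * geo (zeta n) (tau n + D n) * (zeta n * beta n - lam))
    + (amax - (a n - amax * 0) / (r - 0)) * 0 * geo (zeta n) (tau n)
      * (zeta n * beta n - lam)
    = Rmax (a n * GX) (a n * GTX + aGD - aGD * / r)).
  { intros r Hr.
    rewrite !Rmult_0_r, !Rminus_0_r, !Rmult_0_l, Rplus_0_r, <- RmaxRmult
      by (unfold Rdiv; apply Rmult_le_pos; [|left; apply Rinv_0_lt_compat]; lra).
    f_equal; unfold GX, GTX, aGD; field; lra. }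
  rewrite !Hform by lra.
  apply Rle_max_compat_l.
  assert (/ p' n <= / p n) by (apply Rinv_le_contravar; lra).
  enough (aGD * / p' n <= aGD * / p n) by lra.
  apply Rmult_le_compat_l; assumption.
Qed.

End DualFunction.

Lemma admissible_bounds amax a N p q n :
  0 < amax -> admissible amax a N p q -> (n < N)%nat ->
  0 <= q n < p n /\ p n <= 1 /\ a n <= amax * p n.
Proof.
  intros Hamax Had Hn; destruct (Had n Hn) as (Hq & Hqp & Hp1 & _ & Hap).
  repeat split; try lra.
  apply (Rmult_le_compat_l amax) in Hap; [|lra].
  unfold Rdiv in Hap; rewrite Rmult_comm, Rmult_assoc, Rinv_l, Rmult_1_r in Hap by lra.
  exact Hap.
Qed.

Theorem theorem5 (N : nat) (B amax : R) (a zeta beta : nat -> R) (tau D : nat -> nat)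
  (HN : (1 <= N)%nat) (HB : 0 < B) (Hamax : 0 < amax)
  (Ha : forall n, (n < N)%nat -> 0 <= a n)
  (Hzeta : forall n, (n < N)%nat -> 0 < zeta n <= 1)
  (Hbeta : forall n, (n < N)%nat -> 0 <= beta n)
  (Htau : forall n, (n < N)%nat -> (1 <= tau n)%nat)
  (HD : forall n, (n < N)%nat -> (1 <= D n)%nat) :
  (forall p q q' : nat -> R,
     admissible amax a N p q -> admissible amax a N p q' ->
     (forall n, (n < N)%nat -> q n <= q' n) ->
     phi_I B amax a zeta beta tau D N p q >= phi_I B amax a zeta beta tau D N p q')
  /\
  (forall p p' : nat -> R,
     admissible amax a N p (fun _ => 0) -> admissible amax a N p' (fun _ => 0) ->
     (forall n, (n < N)%nat -> p n <= p' n) ->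
     phi_I B amax a zeta beta tau D N p (fun _ => 0)
       <= phi_I B amax a zeta beta tau D N p' (fun _ => 0)).
Proof.
  assert (Hrates : forall p q, admissible amax a N p q ->
            forall n, (n < N)%nat -> 0 <= p n <= 1).
  { intros p q Had n Hn; destruct (admissible_bounds amax a N p q n Hamax Had Hn); lra. }
  split.
  - intros p q q' Hq Hq' Hle; apply Rle_ge.
    apply phi_I_le; eauto; intros lam Hlam.
    rewrite !g_I_sumN; apply Rplus_le_compat_l, sumN_le; intros n Hn.
    destruct (admissible_bounds amax a N p q n Hamax Hq Hn) as (? & ? & ?).
    destruct (admissible_bounds amax a N p q' n Hamax Hq' Hn) as (? & ? & ?).
    specialize (Hle n Hn); apply g_summand_antitone_q; auto; lra.
  - intros p p' Hp Hp' Hle.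
    apply phi_I_le; eauto; intros lam Hlam.
    rewrite !g_I_sumN; apply Rplus_le_compat_l, sumN_le; intros n Hn.
    destruct (admissible_bounds amax a N p (fun _ => 0) n Hamax Hp Hn) as (? & ? & ?).
    destruct (admissible_bounds amax a N p' (fun _ => 0) n Hamax Hp' Hn) as (? & ? & ?).
    specialize (Hle n Hn); apply g_summand_monotone_p; auto; lra.
Qed.
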